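(* Let $p\geq1$, $\mu>0$, and let $g:\mathbb{R}^n\to\mathbb{R}\cup\{+\infty\}$ be convex. Let $\lambda^{\ast}$ be the optimal solution of $$\min_{\lambda\in\mathbb{R}^n}\Big\{g(\lambda)+\frac{\mu}{1+\frac1p}\lVert\lambda\rVert^{1+\frac1p}\Big\},$$ and suppose $\lambda^{\ast}\neq0$. Let $\lambda^k\in\mathbb{R}^n$ with $\lVert\lambda^k\rVert>0$, set $t^k=\lVert\lambda^k\rVert^{\frac1p-1}$, and let $\lambda^{k+1}=\arg\min_{\lambda\in\mathbb{R}^n}\{g(\lambda)+\frac{\mu}{2}t^k\lVert\lambda\rVert^2\}$. Then $$\big(\lVert\lambda^k\rVert^{1-\frac1p}-\lVert\lambda^{\ast}\rVert^{1-\frac1p}\big)\big(\lVert\lambda^{k+1}\rVert^2-\lVert\lambda^{\ast}\rVert^2\big)\geq0,$$ and $$\big(\lVert\lambda^k\rVert^{1-\frac1p}-\lVert\lambda^{\ast}\rVert^{1-\frac1p}\big)\big(\lVert\lambda^k\rVert^{1-\frac1p}-\lVert\lambda^{k+1}\rVert^{1-\frac1p}\big)\geq0.$$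
   Context: $\lVert\cdot\rVert$ is the Euclidean norm. The minimizers above are assumed to exist. This is one step of the fixed point iteration: given $\lambda^k$, set $t^k=\lVert\lambda^k\rVert^{1/p-1}$ if $\lambda^k\neq0$ and $t^k=0$ otherwise, and $\lambda^{k+1}=\arg\min_\lambda\{g(\lambda)+\frac{\mu}{2}t^k\lVert\lambda\rVert^2\}$. *)

From mathcomp Require Import all_boot all_order all_algebra.
From mathcomp Require Import all_classical all_reals all_analysis.
Set Implicit Arguments. Unset Strict Implicit. Unset Printing Implicit Defensive.
Import Order.TTheory GRing.Theory Num.Theory.
Local Open Scope ring_scope.

Definition enorm (R : realType) (n : nat) (x : 'rV[R]_n) : R :=
  Num.sqrt (\sum_(i < n) x ord0 i ^+ 2).

(* Convexity of an extended-real valued function R^n -> R u {+oo}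
   (values in \bar R; the no -oo condition is a separate hypothesis). *)
Definition ext_convex (R : realType) (n : nat) (g : 'rV[R]_n -> \bar R) : Prop :=
  forall (x y : 'rV[R]_n) (t : R), 0 <= t -> t <= 1 ->
    (g (t *: x + (1 - t) *: y)%R <= t%:E * g x + (1 - t)%:E * g y)%E.

Definition is_argmin (R : realType) (n : nat) (F : 'rV[R]_n -> \bar R)
  (x : 'rV[R]_n) : Prop :=
  forall y : 'rV[R]_n, (F x <= F y)%E.

From mathcomp Require Import all_boot all_order all_algebra.
From mathcomp Require Import all_classical all_reals all_analysis.
From mathcomp Require Import ring lra.
Import Order.TTheory GRing.Theory Num.Theory.
Local Open Scope ring_scope.

(* Write a, b, c for the norms of lambda*, lambda^k, lambda^(k+1) and q = 1/p;
   both inequalities follow once c is shown to lie between a and b.  By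
   concavity of s |-> s^((1+q)/2), the quadratic tangent to the regularizer at
   lambda* majorizes it, so lambda* also minimizes g + (mu/2) a^(q-1) |.|^2,
   while lambda^(k+1) minimizes g + (mu/2) b^(q-1) |.|^2.  For minimizers x, y
   of g + v |.|^2 and g + w |.|^2 with g convex, adding the two variational
   inequalities and using Cauchy-Schwarz gives (|x| - |y|) (w |y| - v |x|) >= 0,
   i.e. |y| lies between |x| and v |x| / w.  Here v a / w = a^q b^(1-q) is a
   weighted geometric mean of a and b. *)

Section Between.
Variable R : realDomainType.
Set Implicit Arguments. Unset Strict Implicit.
Implicit Types (a b c d : R).

Definition between a b c := (a <= c <= b) || (b <= c <= a).

Lemma prod_ge0_between a b c : 0 <= (c - a) * (b - c) -> between a b c.
Proof.
move=> H; apply/orP; have [ab|ba] := lerP a b.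
  by left; apply/andP; split; nra.
by right; apply/andP; split; nra.
Qed.

Lemma between_trans a b c d : between a d c -> between a b d -> between a b c.
Proof.
by rewrite /between; do 2 case/orP=> /andP[? ?]; apply/orP;
  [left | right | left | right]; apply/andP; split; lra.
Qed.

Lemma between_homo_ge0 (f h : R -> R) a b c :
  {in Num.nneg &, {homo f : x y / x <= y}} ->
  {in Num.nneg &, {homo h : x y / x <= y}} ->
  0 <= a -> 0 <= b -> between a b c ->
  0 <= (f b - f a) * (h c - h a) /\ 0 <= (f b - f a) * (h b - h c).
Proof.
move=> f_homo h_homo a0 b0 /orP[] /andP[le1 le2].
- have c0 : 0 <= c := le_trans a0 le1.
  have fab : 0 <= f b - f a by rewrite subr_ge0 f_homo ?(le_trans le1).
  by split; apply: mulr_ge0; rewrite // subr_ge0 h_homo.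
- have c0 : 0 <= c := le_trans b0 le1.
  have fab : f b - f a <= 0 by rewrite subr_le0 f_homo ?(le_trans le1).
  by split; apply: mulr_le0; rewrite // subr_le0 h_homo.
Qed.

End Between.

Section PowR.
Variable R : realType.
Set Implicit Arguments. Unset Strict Implicit.
Implicit Types (a b e q s u x y : R).

Lemma powR_mean_le x y e : 0 <= x -> 0 <= y -> 0 <= e <= 1 ->
  x `^ e * y `^ (1 - e) <= e * x + (1 - e) * y.
Proof.
move=> x0 y0 /andP[]; rewrite le_eqVlt => /predU1P[<- _|e0].
  by rewrite powRr0 subr0 powRr1 // !mul1r mul0r add0r.
rewrite le_eqVlt => /predU1P[-> | e1].
  by rewrite subrr powRr0 powRr1 // !mulr1 mul0r addr0 mul1r.
have e'0 : 0 < 1 - e by rewrite subr_gt0.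
have := @conjugate_powR R (x `^ e) (y `^ (1 - e)) e^-1 (1 - e)^-1
  (powR_ge0 _ _) (powR_ge0 _ _).
rewrite !invr_gt0 e0 e'0 => /(_ isT isT).
rewrite !invrK addrC subrK -!powRrM !mulfV ?gt_eqF // !powRr1 // => /(_ erefl).
by rewrite [x * e]mulrC [y * _]mulrC.
Qed.

Lemma powR_concave_tangent e s a : 0 <= e <= 1 -> 0 <= s -> 0 < a ->
  s `^ e <= a `^ e + e * a `^ (e - 1) * (s - a).
Proof.
move=> e01 s0 a0.
have ae0 : 0 < a `^ (e - 1) by rewrite powR_gt0.
have aeK : a `^ (1 - e) * a `^ (e - 1) = 1.
  rewrite -powRD; last by rewrite (gt_eqF a0) implybT.
  by rewrite addrA subrK subrr powRr0.
have ae : a * a `^ (e - 1) = a `^ e.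
  rewrite -{1}[a]powRr1 ?ltW // -powRD; last by rewrite (gt_eqF a0) implybT.
  by rewrite addrC subrK.
have -> : s `^ e = s `^ e * a `^ (1 - e) * a `^ (e - 1).
  by rewrite -mulrA aeK mulr1.
apply: le_trans (ler_wpM2r (ltW ae0) (powR_mean_le s0 (ltW a0) e01)) _.
rewrite -ae; lra.
Qed.

Lemma powR_sqr_tangent q u a : -1 <= q <= 1 -> 0 <= u -> 0 < a ->
  u `^ (1 + q) - a `^ (1 + q) <= (1 + q) / 2 * a `^ (q - 1) * (u ^+ 2 - a ^+ 2).
Proof.
move=> q11 u0 a0; set e := (1 + q) / 2.
have e01 : 0 <= e <= 1 by apply/andP; split; rewrite /e; lra.
have sqr_powR x r : 0 <= x -> (x ^+ 2) `^ r = x `^ (2 * r).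
  by move=> x0; rewrite powRrM powR_mulrn.
have := powR_concave_tangent e01 (sqr_ge0 u) (exprn_gt0 2 a0).
rewrite !sqr_powR ?(ltW a0) //.
have -> : 2 * e = 1 + q by rewrite /e; lra.
have -> : 2 * (e - 1) = q - 1 by rewrite /e; lra.
by rewrite -lerBlDl.
Qed.

Lemma between_powR_mean q a b : 0 <= q <= 1 -> 0 <= a -> 0 <= b ->
  between a b (a `^ q * b `^ (1 - q)).
Proof.
move=> /andP[q0 q1] a0 b0; have q'0 : 0 <= 1 - q by rewrite subr_ge0.
have powR_split x : 0 <= x -> x `^ q * x `^ (1 - q) = x.
  move=> x0; rewrite -powRD; last by rewrite addrC subrK oner_eq0.
  by rewrite addrC subrK powRr1.
have powR_le r x y : 0 <= r -> 0 <= x -> x <= y -> x `^ r <= y `^ r.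
  by move=> r0 x0 xy; rewrite ge0_ler_powR ?nnegrE ?(le_trans x0 xy).
apply/orP; have [ab|/ltW ba] := leP a b; [left | right]; apply/andP; split.
- by rewrite -{1}(powR_split a a0) ler_wpM2l ?powR_ge0 ?powR_le.
- by rewrite -{2}(powR_split b b0) ler_wpM2r ?powR_ge0 ?powR_le.
- by rewrite -{1}(powR_split b b0) ler_wpM2r ?powR_ge0 ?powR_le.
- by rewrite -{2}(powR_split a a0) ler_wpM2l ?powR_ge0 ?powR_le.
Qed.

Lemma powR_mean_ratio q a b : 0 < a ->
  a `^ (q - 1) * a / b `^ (q - 1) = a `^ q * b `^ (1 - q).
Proof.
move=> a0; rewrite -powRN opprB; congr (_ * _).
rewrite -{2}[a]powRr1 ?ltW // -powRD ?(gt_eqF a0) ?implybT //.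
by rewrite subrK.
Qed.

End PowR.

Section EuclideanNorm.
Variables (R : realType) (n : nat).
Set Implicit Arguments. Unset Strict Implicit.
Implicit Types x y : 'rV[R]_n.

Definition dot x y := \sum_(i < n) x ord0 i * y ord0 i.

Lemma dotC x y : dot x y = dot y x.
Proof. by apply: eq_bigr => i _; rewrite mulrC. Qed.

Lemma dot0l y : dot 0 y = 0.
Proof. by rewrite /dot big1 // => i _; rewrite mxE mul0r. Qed.

Lemma enorm_ge0 x : 0 <= enorm x.
Proof. exact: sqrtr_ge0. Qed.

Lemma enorm_sqr x : enorm x ^+ 2 = dot x x.
Proof.
rewrite sqr_sqrtr; last by apply: sumr_ge0 => i _; exact: sqr_ge0.
by apply: eq_bigr => i _; rewrite expr2.
Qed.

Lemma enorm_eq0 x : (enorm x == 0) = (x == 0).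
Proof.
apply/idP/eqP => [|->].
  2: by rewrite /enorm big1 ?sqrtr0 // => i _; rewrite mxE expr0n.
rewrite sqrtr_eq0 => sum_le0; apply/matrixP => i j; rewrite ord1 mxE.
have /psumr_eq0P sqr_eq0 : \sum_(k < n) x ord0 k ^+ 2 = 0.
  by apply/eqP; rewrite eq_le sum_le0 sumr_ge0 // => k _; exact: sqr_ge0.
by apply/eqP; rewrite -sqrf_eq0 sqr_eq0 // => k _; exact: sqr_ge0.
Qed.

Lemma enorm_sqr_combine x y s :
  enorm (s *: y + (1 - s) *: x) ^+ 2
  = s ^+ 2 * dot y y + 2 * s * (1 - s) * dot x y + (1 - s) ^+ 2 * dot x x.
Proof.
rewrite enorm_sqr /dot !mulr_sumr -!big_split /=.
by apply: eq_bigr => i _; rewrite !mxE; ring.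
Qed.

Lemma cauchy_schwarz x y : dot x y <= enorm x * enorm y.
Proof.
have [/eqP|x0] := eqVneq (enorm x) 0.
  by rewrite enorm_eq0 => /eqP->; rewrite dot0l mulr_ge0 ?enorm_ge0.
have [/eqP|y0] := eqVneq (enorm y) 0.
  by rewrite enorm_eq0 => /eqP->; rewrite dotC dot0l mulr_ge0 ?enorm_ge0.
have {}x0 : 0 < enorm x by rewrite lt_neqAle eq_sym x0 enorm_ge0.
have {}y0 : 0 < enorm y by rewrite lt_neqAle eq_sym y0 enorm_ge0.
set a := enorm x; set c := enorm y.
have : 0 <= \sum_(i < n) (c * x ord0 i - a * y ord0 i) ^+ 2.
  by apply: sumr_ge0 => i _; exact: sqr_ge0.
have -> : \sum_(i < n) (c * x ord0 i - a * y ord0 i) ^+ 2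
    = c ^+ 2 * dot x x - 2 * c * a * dot x y + a ^+ 2 * dot y y.
  rewrite /dot !mulr_sumr -sumrN -!big_split /=.
  by apply: eq_bigr => i _; ring.
rewrite -!enorm_sqr -/a -/c => h.
have ac0 : 0 < a * c by rewrite mulr_gt0.
nra.
Qed.

End EuclideanNorm.

Lemma weighted_prod_between (R : realFieldType) (v w a c : R) : 0 < w ->
  0 <= (a - c) * (w * c - v * a) -> between a (v * a / w) c.
Proof.
move=> w0 h; apply: prod_ge0_between.
have -> : (c - a) * (v * a / w - c) = (a - c) * (w * c - v * a) / w.
  by field; rewrite gt_eqF.
exact: divr_ge0 h (ltW w0).
Qed.

Lemma le_of_forall_addr_mul01 (R : realFieldType) (u v w : R) :
  (forall s, 0 < s -> s <= 1 -> u <= v + s * w) -> u <= v.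
Proof.
move=> H; have [w0|w0] := lerP w 0.
  by have := H 1 ltr01 (lexx 1); rewrite mul1r => /le_trans; apply; rewrite gerDl.
apply/ler_addgt0Pr => e e0; pose s := Num.min 1 (e / w).
have s0 : 0 < s by rewrite lt_min ltr01 divr_gt0.
have s1 : s <= 1 by rewrite ge_min lexx.
have := H s s0 s1 => /le_trans; apply.
by rewrite lerD2l -ler_pdivlMr // ge_min lexx orbT.
Qed.

Section RegularizedArgmin.
Variables (R : realType) (n : nat) (g : 'rV[R]_n -> \bar R).
Set Implicit Arguments. Unset Strict Implicit.
Implicit Types (x y : 'rV[R]_n) (v w : R).

Lemma argmin_fin_num (h : 'rV[R]_n -> R) x :
  (forall y, g y != -oo%E) -> (exists y, g y != +oo%E) ->
  is_argmin (fun l => (g l + (h l)%:E)%E) x -> g x \is a fin_num.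
Proof.
move=> gNy [y gy] xmin; rewrite fin_numE gNy /=; apply/eqP => gx.
have := xmin y; rewrite /= gx addye // leye_eq.
by move: gy (gNy y); case: (g y).
Qed.

Lemma argmin_majorant (F H : 'rV[R]_n -> R) x :
  is_argmin (fun l => (g l + (F l)%:E)%E) x ->
  (forall y, F y - F x <= H y - H x) ->
  is_argmin (fun l => (g l + (H l)%:E)%E) x.
Proof.
move=> xmin FH y; have := leeD2r (H x - F x)%:E (xmin y).
rewrite -!addeA -!EFinD subrKC => /le_trans; apply.
by apply: leeD2l; rewrite lee_fin; have := FH y; lra.
Qed.

Lemma argmin_powR_sqr mu q x : 0 <= mu -> -1 < q <= 1 -> x != 0 ->
  is_argmin (fun l => (g l + (mu / (1 + q) * powR (enorm l) (1 + q))%:E)%E) x ->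
  is_argmin (fun l =>
    (g l + (mu / 2 * powR (enorm x) (q - 1) * enorm l ^+ 2)%:E)%E) x.
Proof.
move=> mu0 /andP[q_gt q_le] x0 xmin.
have q'0 : 0 < 1 + q by rewrite -ltrBlDl sub0r.
have a0 : 0 < enorm x by rewrite lt_neqAle eq_sym enorm_eq0 x0 enorm_ge0.
apply: argmin_majorant xmin _ => y; rewrite -!mulrBr.
set A := powR (enorm x) (q - 1).
have -> : mu / 2 * A * (enorm y ^+ 2 - enorm x ^+ 2)
    = mu / (1 + q) * ((1 + q) / 2 * A * (enorm y ^+ 2 - enorm x ^+ 2)).
  by field; rewrite gt_eqF.
apply: ler_wpM2l; first by rewrite divr_ge0 // ltW.
by apply: powR_sqr_tangent; rewrite ?enorm_ge0 // q_le andbT ltW.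
Qed.

Hypothesis g_convex : ext_convex g.

Lemma argmin_sqr_variational w x y :
  is_argmin (fun l => (g l + (w * enorm l ^+ 2)%:E)%E) x ->
  g x \is a fin_num -> g y \is a fin_num ->
  fine (g x) - fine (g y) <= 2 * w * (dot x y - enorm x ^+ 2).
Proof.
move=> xmin gx gy.
apply: (le_of_forall_addr_mul01 (w := w * (dot y y - 2 * dot x y + dot x x))).
move=> s s0 s1; set z := s *: y + (1 - s) *: x.
have := le_trans (xmin z) (leeD2r _ (g_convex y x (ltW s0) s1)).
rewrite -(fineK gx) -(fineK gy) -!EFinM -!EFinD lee_fin.
rewrite enorm_sqr_combine enorm_sqr.
by move=> h; rewrite -(ler_pM2l s0); nra.
Qed.

Lemma argmin_sqr_weighted_norm v w x y : 0 <= v -> 0 <= w ->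
  is_argmin (fun l => (g l + (v * enorm l ^+ 2)%:E)%E) x ->
  is_argmin (fun l => (g l + (w * enorm l ^+ 2)%:E)%E) y ->
  g x \is a fin_num -> g y \is a fin_num ->
  0 <= (enorm x - enorm y) * (w * enorm y - v * enorm x).
Proof.
move=> v0 w0 xmin ymin gx gy.
have := argmin_sqr_variational xmin gx gy.
have := argmin_sqr_variational ymin gy gx.
have := cauchy_schwarz x y; rewrite dotC; nra.
Qed.

End RegularizedArgmin.

Theorem lemma4p4 (R : realType) (n : nat) (p mu : R)
  (g : 'rV[R]_n -> \bar R) (lstar lk lk1 : 'rV[R]_n) :
  1 <= p -> 0 < mu ->
  ext_convex g ->
  (forall x, g x != -oo%E) ->
  (exists x, g x != +oo%E) ->
  is_argmin (fun l => (g l + (mu / (1 + p^-1) * powR (enorm l) (1 + p^-1))%:E)%E)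
    lstar ->
  lstar != 0 ->
  0 < enorm lk ->
  is_argmin (fun l => (g l + (mu / 2 * powR (enorm lk) (p^-1 - 1)
                                * enorm l ^+ 2)%:E)%E) lk1 ->
  0 <= (powR (enorm lk) (1 - p^-1) - powR (enorm lstar) (1 - p^-1))
       * (enorm lk1 ^+ 2 - enorm lstar ^+ 2)
  /\
  0 <= (powR (enorm lk) (1 - p^-1) - powR (enorm lstar) (1 - p^-1))
       * (powR (enorm lk) (1 - p^-1) - powR (enorm lk1) (1 - p^-1)).
Proof.
move=> p1 mu0 g_cvx g_Ny g_fin star_min lstar0 lk0 lk1_min.
have p0 : 0 < p := lt_le_trans ltr01 p1.
set q := p^-1 in star_min lk1_min *.
have q0 : 0 < q by rewrite invr_gt0.
have q1 : q <= 1 by rewrite invf_le1.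
have q_itv : -1 < q <= 1 by rewrite q1 (lt_trans _ q0) ?ltrN10.
set a := enorm lstar; set b := enorm lk; set c := enorm lk1.
have a0 : 0 < a by rewrite lt_neqAle eq_sym enorm_eq0 lstar0 enorm_ge0.
set A := powR a (q - 1); set T := powR b (q - 1).
have star_min2 := argmin_powR_sqr (ltW mu0) q_itv lstar0 star_min.
have wA0 : 0 < mu / 2 * A by rewrite !mulr_gt0 ?powR_gt0.
have wT0 : 0 < mu / 2 * T by rewrite !mulr_gt0 ?powR_gt0.
have := argmin_sqr_weighted_norm g_cvx (ltW wA0) (ltW wT0) star_min2 lk1_min
  (argmin_fin_num g_Ny g_fin star_min2) (argmin_fin_num g_Ny g_fin lk1_min).
move=> /(weighted_prod_between wT0).
have -> : mu / 2 * A * a / (mu / 2 * T) = A * a / T.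
  by field; rewrite !gt_eqF ?powR_gt0.
rewrite powR_mean_ratio // => c_between.
have c_ab : between a b c.
  apply: between_trans c_between (between_powR_mean _ (ltW a0) (ltW lk0)).
  by rewrite q1 ltW.
have powR_homo :
    {in Num.nneg &, {homo (fun x : R => powR x (1 - q)) : x y / x <= y}}.
  by apply: ge0_ler_powR; rewrite subr_ge0.
have sqr_homo : {in Num.nneg &, {homo (fun x : R => x ^+ 2) : x y / x <= y}}.
  by move=> x y x0 y0; rewrite ler_sqr.
split.
- exact: (between_homo_ge0 powR_homo sqr_homo (ltW a0) (ltW lk0) c_ab).1.
- exact: (between_homo_ge0 powR_homo powR_homo (ltW a0) (ltW lk0) c_ab).2.
Qed.
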